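(* Let $M,N\in\mathbb{N}$ and let $\mathbf{M}(M,N)$ be the Motzkin shift. Let $G'$ be the directed graph with one vertex and $M+N+1$ loops named $\lambda_1,\rho_1,\dots,\rho_M,1_1,\dots,1_N$, and let $X_{G'}$ be its edge shift, so that $\mathcal{B}_n(X_{G'})$ is the set of all words of length $n$ over the alphabet $\{\lambda_1,\rho_1,\dots,\rho_M,1_1,\dots,1_N\}$. Then for every $n\geq 1$ there exists a bijection from the set $$\{x\in P_n(\mathbf{M}(M,N)) : \text{the multiplier of } x \text{ is positive, neutral, or equal to } \lambda_1^k \text{ for some } k\geq 1\}$$ onto $\mathcal{B}_n(X_{G'})$.
   Context: Alphabet $\Sigma=\{\lambda_1,\dots,\lambda_M,\rho_1,\dots,\rho_M,1_1,\dots,1_N\}$. $\mathcal{M}(M,N)$ is the monoid with zero generated by $\Sigma$ and an identity $\mathbf{1}$, subject only to the relations $\lambda_i\rho_i=\mathbf{1}$ ($1\le i\le M$), $\lambda_i\rho_j=0$ ($i\neq j$), $1_i\cdot\alpha=\alpha\cdot 1_i=\alpha$ for all $\alpha\in\Sigma\cup\{\mathbf 1\}$ (so $1_i1_j=\mathbf 1$), $\mathbf 1$ is the identity and $0$ is absorbing; no other relations are imposed (e.g. $\rho_i\lambda_j$ does not reduce). The map $\mathit{red}:\Sigma^*\to\mathcal{M}(M,N)$ sends a word $\alpha_1\cdots\alpha_n$ to the product $\alpha_1\cdot\ldots\cdot\alpha_n$ and the empty word to $\mathbf 1$. The Motzkin shift is $\mathbf{M}(M,N)=\{x\in\Sigma^{\mathbb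 Z}:\mathit{red}(x_ix_{i+1}\cdots x_j)\neq 0 \text{ for all } i\le j\}$ with the shift map $\sigma$. For a subshift $X$, $\mathcal B_n(X)$ is the set of words of length $n$ occurring in points of $X$, and $P_n(X)=\{x\in X:\sigma^n x=x\}$; each $x\in P_n(X)$ equals $\alpha^\infty$ for the block $\alpha=x_0\cdots x_{n-1}\in\mathcal B_n(X)$ (its $n$-periodic defining block). Let $\mathcal M^+$ be the (free) submonoid generated by $\rho_1,\dots,\rho_M$ and $\mathcal M^-$ the (free) submonoid generated by $\lambda_1,\dots,\lambda_M$. Every block $\alpha$ can be written $\alpha=\alpha_+\alpha_-$ with $\mathit{red}(\alpha_+)\in\mathcal M^+$ and $\mathit{red}(\alpha_-)\in\mathcal M^-$; the multiplier of $\alpha$ (and of $x=\alpha^\infty$) is $\mathit{red}(\alpha_-\alpha_+)$. It is called positive if it lies in $\mathcal M^+\setminus\{\mathbf 1\}$, negative if it lies in $\mathcal M^-\setminus\{\mathbf 1\}$, and neutral if it equals $\mathbf 1$. *)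

From mathcomp Require Import all_boot all_order all_algebra.
Set Implicit Arguments. Unset Strict Implicit. Unset Printing Implicit Defensive.
Import GRing.Theory Num.Theory.

(* The alphabet Sigma = {lambda_1..lambda_M, rho_1..rho_M, 1_1..1_N}
   (indices shifted to 0-based ordinals). *)
Inductive Sigma (M N : nat) : Type :=
| lam of 'I_M
| rho of 'I_M
| one of 'I_N.

(* Elements of the monoid with zero M(M,N), in normal form:
   None = 0 ;  Some (P, Lrev) = rho_{P_1} ... rho_{P_k} lambda_{l_1} ... lambda_{l_m}
   where Lrev = [:: l_m; ...; l_1] is the lambda part stored reversed.
   Every nonzero element has a unique such normal form (the relations
   lambda_i rho_i = 1, lambda_i rho_j = 0 (i<>j), 1_i = 1 form a
   confluent terminating rewriting system whose irreducible words are
   rho-words followed by lambda-words). *)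
Definition motz (M : nat) := option (seq 'I_M * seq 'I_M).

Definition motz_one (M : nat) : motz M := Some ([::], [::]).

Definition motz_step (M N : nat) (s : motz M) (a : Sigma M N) : motz M :=
  match s with
  | None => None
  | Some (P, L) =>
    match a with
    | one _ => Some (P, L)
    | lam i => Some (P, i :: L)
    | rho j =>
      match L with
      | [::] => Some (rcons P j, [::])
      | i :: L' => if i == j then Some (P, L') else None
      end
    end
  end.

Definition red (M N : nat) (w : seq (Sigma M N)) : motz M :=
  foldl (@motz_step M N) (motz_one M) w.

Definition in_Mplus (M : nat) (m : motz M) : Prop :=
  exists P, m = Some (P, [::]).
Definition in_Mminus (M : nat) (m : motz M) : Prop :=
  exists L, m = Some ([::], L).

Definition point (M N : nat) := int -> Sigma M N.

Definition wordAt (M N : nat) (x : point M N) (i : int) (m : nat) : seq (Sigma M N) :=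
  mkseq (fun k => x (i + (k%:Z))%R) m.

Definition inMotzkin (M N : nat) (x : point M N) : Prop :=
  forall (i : int) (m : nat), red (wordAt x i m.+1) <> None.

Definition shift (M N : nat) (x : point M N) : point M N :=
  fun i => x (i + 1)%R.

Definition periodicMotzkin (M N : nat) (n : nat) (x : point M N) : Prop :=
  inMotzkin x /\ iter n (@shift M N) x = x.

Definition is_multiplier (M N : nat) (alpha : seq (Sigma M N)) (m : motz M) : Prop :=
  exists ap am : seq (Sigma M N),
    [/\ alpha = ap ++ am, in_Mplus (red ap), in_Mminus (red am) &
        m = red (am ++ ap)].

Definition positive_elt (M : nat) (m : motz M) : Prop :=
  exists P, P <> [::] /\ m = Some (P, [::]).
Definition neutral_elt (M : nat) (m : motz M) : Prop := m = motz_one M.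
Definition lam_power (M : nat) (l1 : 'I_M) (m : motz M) : Prop :=
  exists k, (1 <= k)%N /\ m = Some ([::], nseq k l1).

Definition PerSet (M N n : nat) (l1 : 'I_M) : Type :=
  { x : point M N |
    periodicMotzkin n x /\
    exists m, is_multiplier (wordAt x 0 n) m /\
      (positive_elt m \/ neutral_elt m \/ lam_power l1 m) }.

Definition in_G'alph (M N : nat) (l1 : 'I_M) (a : Sigma M N) : bool :=
  match a with
  | lam i => i == l1
  | _ => true
  end.

Definition BnG' (M N n : nat) (l1 : 'I_M) : Type :=
  { w : seq (Sigma M N) | size w = n /\ all (@in_G'alph M N l1) w }.

From Pilot Require Import Defs.
From mathcomp Require Import all_boot all_order all_algebra zify.
From Stdlib Require Import FunctionalExtensionality ProofIrrelevance.
Set Implicit Arguments. Unset Strict Implicit. Unset Printing Implicit Defensive.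
Import GRing.Theory Num.Theory.

(* A point of P_n(M(M,N)) is the periodic extension of its block b, and b^oo
   never reduces to 0 once the multiplier of b = b_+ b_- lies in M^+ or M^-,
   because b^(k+1) = b_+ (b_- b_+)^k b_-.  The bijection replaces every lambda_i
   of b by lambda_1.  To invert it, let P be the rho-part of red b, which only
   depends on the erased block.  The multiplier condition says that the
   lambda-part of red (b rho^P) is a power of lambda_1; reading b from right to
   left, this forces every lambda to carry the index of the first rho of the
   reduced suffix, or that of lambda_1 when that suffix starts with no rho. *)

Lemma rcons_nseq (T : Type) k (x : T) : rcons (nseq k x) x = nseq k.+1 x.
Proof. by elim: k => //= k ->. Qed.

Lemma flatten_nseqS_cat (T : Type) (u v : seq T) k :
  flatten (nseq k.+1 (u ++ v)) = u ++ flatten (nseq k (v ++ u)) ++ v.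
Proof.
elim: k => [|k IH]; first by rewrite /= cats0.
transitivity ((u ++ v) ++ flatten (nseq k.+1 (u ++ v))); first by [].
by rewrite IH /= !catA.
Qed.

Lemma nth_flatten_nseq (T : Type) (d : T) (s : seq T) K p :
  (p < K * size s)%N -> nth d (flatten (nseq K s)) p = nth d s (p %% size s).
Proof.
elim: K p => [|K IH] p; first by rewrite mul0n.
rewrite mulSn /= nth_cat => p_lt; case: ltnP => p_s; first by rewrite modn_small.
by rewrite IH -?(modnDr (p - size s)) ?subnK //; lia.
Qed.

Lemma modz_abs (i : int) n : (0 < n)%N -> Posz `|(i %% Posz n)%Z|%N = (i %% Posz n)%Z.
Proof. by move=> n_gt0; rewrite gez0_abs // modz_ge0 // eqz_nat -lt0n. Qed.

Section MotzkinPeriodicPoints.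
Variables M N : nat.
Implicit Types (P L : seq 'I_M) (x y m : motz M) (a : Sigma M N).
Implicit Types (u v w b : seq (Sigma M N)).

(* Reduces lambda^L rho^P; L is stored reversed, so the heads of L and P are
   the adjacent letters. *)
Fixpoint cancel_lam_rho L P : option (seq 'I_M * seq 'I_M) :=
  match L, P with
  | i :: L', j :: P' => if i == j then cancel_lam_rho L' P' else None
  | _, _ => Some (L, P)
  end.

Definition motz_mul x y : motz M :=
  match x, y with
  | Some (P, L), Some (P', L') =>
      if cancel_lam_rho L P' is Some (L1, P1) then Some (P ++ P1, L' ++ L1)
      else None
  | _, _ => None
  end.

Lemma cancel_lam_rho_nil L P L1 P1 :
  cancel_lam_rho L P = Some (L1, P1) -> L1 = [::] \/ P1 = [::].
Proof.
elim: L P => [|i L IH] [|j P] /=; try by move=> [<- <-]; auto.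
by case: eqP => // _; apply: IH.
Qed.

Lemma cancel_lam_rho_rcons L P j :
  cancel_lam_rho L (rcons P j) =
  match cancel_lam_rho L P with
  | Some ([::], P1) => Some ([::], rcons P1 j)
  | Some (i :: L1, P1) => if i == j then Some (L1, P1) else None
  | None => None
  end.
Proof.
elim: L P => [|i L IH] [|k P] //=; first by case: L {IH}.
by case: eqP.
Qed.

Lemma motz_step_mul x y a :
  motz_step (motz_mul x y) a = motz_mul x (motz_step y a).
Proof.
case: x => [[P L]|]; case: y => [[P' L']|] //=.
case: a => [i|j|k] /=; try by case: (cancel_lam_rho L P') => [[]|].
case: L' => [|i L'] /=; last first.
  by case E: (cancel_lam_rho L P') => [[L2 P2]|] /=; case: (i == j); rewrite ?E.
rewrite cancel_lam_rho_rcons.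
case E: (cancel_lam_rho L P') => [[[|i L1] P1]|] //=; first by rewrite rcons_cat.
have [//|->] := cancel_lam_rho_nil E.
by case: eqP; rewrite ?cats0.
Qed.

Lemma motz_mulr1 x : motz_mul x (motz_one M) = x.
Proof. by case: x => [[P [|i L]]|] //=; rewrite cats0. Qed.

Lemma motz_mulr0 x : motz_mul x None = None.
Proof. by case: x => [[]|]. Qed.

Lemma red_rcons b a : red (rcons b a) = motz_step (red b) a.
Proof. exact: foldl_rcons. Qed.

Lemma foldl_motz_step x b : foldl (@motz_step M N) x b = motz_mul x (red b).
Proof.
elim/last_ind: b => [|b a IH]; first by rewrite motz_mulr1.
by rewrite foldl_rcons red_rcons IH motz_step_mul.
Qed.

Lemma red_cat u v : red (u ++ v) = motz_mul (red u) (red v).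
Proof. by rewrite {1}/red foldl_cat foldl_motz_step. Qed.

Lemma red_cons a v : red (a :: v) = motz_mul (red [:: a]) (red v).
Proof. exact: red_cat [:: a] v. Qed.

Lemma red_infix u v w : red (u ++ v ++ w) <> None -> red v <> None.
Proof. by rewrite !red_cat => nz0 v0; apply: nz0; rewrite v0 /= motz_mulr0. Qed.

Definition rhos P : seq (Sigma M N) := map (rho N) P.

Lemma red_rhos P : red (rhos P) = Some (P, [::]).
Proof.
elim/last_ind: P => [|P j IH] //.
by rewrite /rhos map_rcons red_rcons IH.
Qed.

Lemma red_split b P L : red b = Some (P, L) ->
  exists ap am,
    [/\ b = ap ++ am, red ap = Some (P, [::]) & red am = Some ([::], L)].
Proof.
elim/last_ind: b P L => [|b a IH] P L; first by move=> [<- <-]; exists [::], [::].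
rewrite red_rcons; case Eb: (red b) => [[P0 L0]|] //.
have [ap [am [Eab Eap Eam]]] := IH _ _ Eb; subst b.
case: a => [i|j|i] /=.
- by move=> [<- <-]; exists ap, (rcons am (lam N i)); rewrite rcons_cat red_rcons Eam.
- case: L0 Eb Eam => [|i L0] Eb Eam.
    move=> [<- <-]; exists (rcons (ap ++ am) (rho N j)), [::].
    by rewrite cats0 red_rcons Eb.
  case: eqP => // <- [<- <-].
  by exists ap, (rcons am (rho N i)); rewrite rcons_cat red_rcons Eam /= eqxx.
- move=> [<- <-]; exists ap, (rcons am (Defs.one M i)).
  by rewrite rcons_cat red_rcons Eam.
Qed.

Lemma is_multiplierP b m :
  is_multiplier b m <->
  exists P L, red b = Some (P, L) /\
              m = motz_mul (Some ([::], L)) (Some (P, [::])).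
Proof.
split.
  move=> [ap [am [-> [P Eap] [L Eam] ->]]]; exists P, L.
  by rewrite !red_cat Eap Eam /= !cats0.
move=> [P [L [/red_split [ap [am [-> Eap Eam]]] ->]]].
exists ap, am; split=> //; [by exists P | by exists L | by rewrite red_cat Eap Eam].
Qed.

Definition admissible (l1 : 'I_M) b :=
  exists m, is_multiplier b m /\
    (positive_elt m \/ neutral_elt m \/ lam_power l1 m).

Lemma admissible_multiplier l1 m :
  positive_elt m \/ neutral_elt m \/ lam_power l1 m ->
  in_Mplus m \/ in_Mminus m.
Proof.
by case=> [[P [_ ->]]|[->|[k [_ ->]]]];
  [left; exists P | left; exists [::] | right; exists (nseq k l1)].
Qed.

Lemma in_Mplus_mul x y : in_Mplus x -> in_Mplus y -> in_Mplus (motz_mul x y).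
Proof. by move=> [P ->] [P' ->]; exists (P ++ P'). Qed.

Lemma in_Mminus_mul x y : in_Mminus x -> in_Mminus y -> in_Mminus (motz_mul x y).
Proof. by move=> [L ->] [L' ->]; exists (L' ++ L); case: L. Qed.

Lemma motz_mul_Mplus_neq0 x y : in_Mplus x -> y <> None -> motz_mul x y <> None.
Proof. by move=> [P ->]; case: y => [[]|]. Qed.

Lemma motz_mul_Mminus_neq0 x y : x <> None -> in_Mminus y -> motz_mul x y <> None.
Proof. by move=> + [L ->]; case: x => [[P [|]]|]. Qed.

Lemma red_pow_closed (S : motz M -> Prop) u k :
  S (motz_one M) -> (forall x y, S x -> S y -> S (motz_mul x y)) ->
  S (red u) -> S (red (flatten (nseq k u))).
Proof. by move=> S1 SM Su; elim: k => //= k IH; rewrite red_cat; apply: SM. Qed.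

Lemma red_pow_neq0 b m k :
  is_multiplier b m -> in_Mplus m \/ in_Mminus m ->
  red (flatten (nseq k b)) <> None.
Proof.
move=> [ap [am [-> Eap Eam ->]]] m_pm; case: k => [//|k].
rewrite flatten_nseqS_cat !red_cat; apply: motz_mul_Mplus_neq0 => //.
apply: motz_mul_Mminus_neq0 => //.
case: m_pm => [m_p|m_m].
  have [|P ->] // := red_pow_closed (S := @in_Mplus M) k _ in_Mplus_mul m_p.
  by exists [::].
have [|L ->] // := red_pow_closed (S := @in_Mminus M) k _ in_Mminus_mul m_m.
by exists [::].
Qed.

Definition periodic_ext (a0 : Sigma M N) b : point M N :=
  fun i => nth a0 b `|(i %% Posz (size b))%Z|%N.

Lemma iter_shift (x : point M N) k i : iter k (@shift M N) x i = x (i + k%:Z)%R.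
Proof.
by elim: k i => [|k IH] i /=; [rewrite addr0 | rewrite /shift IH; congr x; lia].
Qed.

Lemma periodic_ext_iter a0 b :
  iter (size b) (@shift M N) (periodic_ext a0 b) = periodic_ext a0 b.
Proof.
by apply: functional_extensionality => i; rewrite iter_shift /periodic_ext modzDr.
Qed.

Lemma wordAt_periodic_ext0 a0 b : wordAt (periodic_ext a0 b) 0 (size b) = b.
Proof.
apply: (@eq_from_nth _ a0); rewrite size_mkseq // => t t_lt.
by rewrite nth_mkseq // add0r /periodic_ext modz_nat absz_nat modn_small.
Qed.

Lemma wordAt_periodic_ext_infix a0 b i (len : nat) : (0 < size b)%N ->
  exists u v K, flatten (nseq K b) = u ++ wordAt (periodic_ext a0 b) i len ++ v.
Proof.
move=> b_gt0; set r := `|(i %% Posz (size b))%Z|%N.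
set F := flatten (nseq (r + len) b).
have size_F : size F = ((r + len) * size b)%N.
  by rewrite size_flatten /shape map_nseq sumn_nseq mulnC.
suff -> : wordAt (periodic_ext a0 b) i len = take len (drop r F).
  by exists (take r F), (drop len (drop r F)), (r + len)%N; rewrite !cat_take_drop.
have r_len_le : (r + len <= (r + len) * size b)%N by rewrite leq_pmulr.
apply: (@eq_from_nth _ a0) => [|t]; rewrite size_mkseq.
  by rewrite size_take size_drop size_F; case: ifP => // /negbT; lia.
move=> t_lt; rewrite nth_mkseq // nth_take // nth_drop nth_flatten_nseq; last by lia.
congr nth; apply/eqP; rewrite -eqz_nat modz_abs // -modz_nat PoszD modz_abs //.
by rewrite modzDml.
Qed.

Lemma periodic_ext_motzkin l1 a0 b :
  (0 < size b)%N -> admissible l1 b -> inMotzkin (periodic_ext a0 b).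
Proof.
move=> b_gt0 [m [mult_m /admissible_multiplier m_pm]] i k.
have [u [v [K EF]]] := wordAt_periodic_ext_infix a0 i k.+1 b_gt0.
by apply: (@red_infix u _ v); rewrite -EF; apply: red_pow_neq0 mult_m m_pm.
Qed.

Lemma periodic_ext_wordAt a0 n (x : point M N) : (0 < n)%N ->
  iter n (@shift M N) x = x -> x = periodic_ext a0 (wordAt x 0 n).
Proof.
move=> n_gt0 per_x.
have per_nat (k : nat) j : x (j + (k * n)%N%:Z)%R = x j.
  elim: k j => [|k IH] j; first by rewrite addr0.
  by rewrite mulSn PoszD addrCA addrC -iter_shift per_x IH.
have per_int (k : int) j : x (j + k * n%:Z)%R = x j.
  case: k => k; first by rewrite -PoszM per_nat.
  by rewrite -(per_nat k.+1) NegzE; congr x; lia.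
apply: functional_extensionality => i.
rewrite /periodic_ext size_mkseq nth_mkseq; last first.
  by rewrite -ltz_nat modz_abs // ltz_pmod.
by rewrite add0r modz_abs // {1}(divz_eq i n) addrC per_int.
Qed.

Definition block_set (l1 : 'I_M) n := {b | size b = n /\ admissible l1 b}.

Lemma periodic_points_blocks l1 n : (0 < n)%N ->
  exists f : PerSet N n l1 -> block_set l1 n, bijective f.
Proof.
move=> n_gt0.
have blockP (x : PerSet N n l1) :
    size (wordAt (sval x) 0 n) = n /\ admissible l1 (wordAt (sval x) 0 n).
  by split; [rewrite size_mkseq | case: (svalP x)].
have pointP (b : block_set l1 n) :
    periodicMotzkin n (periodic_ext (lam N l1) (sval b)) /\
    admissible l1 (wordAt (periodic_ext (lam N l1) (sval b)) 0 n).
  case: b => b [size_b adm_b]; rewrite /= -size_b wordAt_periodic_ext0.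
  have b_gt0 : (0 < size b)%N by rewrite size_b.
  split=> //; split; first exact: periodic_ext_motzkin b_gt0 adm_b.
  exact: periodic_ext_iter.
exists (fun p => exist (fun b => size b = n /\ admissible l1 b) _ (blockP p)).
exists (fun c : block_set l1 n => exist (fun x : point M N =>
  periodicMotzkin n x /\ admissible l1 (wordAt x 0 n)) _ (pointP c)).
  move=> [x [[mot_x per_x] adm_x]]; apply: subset_eq_compat.
  by rewrite /= -periodic_ext_wordAt.
move=> [b [size_b adm_b]]; apply: subset_eq_compat.
by rewrite /= -size_b wordAt_periodic_ext0.
Qed.

Definition erase_lam (l1 : 'I_M) a := if a is lam _ then lam N l1 else a.

Definition rho_count_step (st : seq 'I_M * nat) a :=
  match a with
  | lam _ => (st.1, st.2.+1)
  | rho j => if st.2 is c.+1 then (st.1, c) else (rcons st.1 j, 0)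
  | _ => st
  end.

(* Tracks the rho-part of red w and the number of pending lambdas; the lambda
   indices do not matter as long as red w <> 0. *)
Definition rho_part w := (foldl rho_count_step ([::], 0) w).1.

Lemma rho_part_erase l1 w : rho_part (map (erase_lam l1) w) = rho_part w.
Proof.
rewrite /rho_part; elim: w ([::], 0) => [|a w IH] st //=.
by rewrite IH; case: a.
Qed.

Lemma rho_part_red w P L : red w = Some (P, L) -> rho_part w = P.
Proof.
suff count P0 L0 P1 L1 : foldl (@motz_step M N) (Some (P0, L0)) w = Some (P1, L1) ->
    foldl rho_count_step (P0, size L0) w = (P1, size L1).
  by rewrite /rho_part => /count /= ->.
elim: w P0 L0 => [|a w IH] P0 L0 /=; first by move=> [-> ->].
case: a => [i|j|i] /=; try exact: IH.
case: L0 => [|i L0] /=; first exact: IH.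
by case: eqP => _; [apply: IH | rewrite (foldl_motz_step None)].
Qed.

Fixpoint fill_lam (l1 : 'I_M) P w : seq (Sigma M N) :=
  if w is a :: w' then
    let t := fill_lam l1 P w' in
    (if a is lam _ then lam N (if red (t ++ rhos P) is Some (j :: _, _) then j else l1)
     else a) :: t
  else [::].

Definition lam1_tail (l1 : 'I_M) m := exists P k, m = Some (P, nseq k l1).

Lemma lam1_tail_fill l1 P w : lam1_tail l1 (red (fill_lam l1 P w ++ rhos P)).
Proof.
elim: w => [|a w [Q [k IH]]] /=; first by exists P, 0; rewrite red_rhos.
rewrite red_cons IH; case: a => [i|j|i] /=.
- case: Q IH => [|j Q] IH /=; last by rewrite eqxx; exists Q, k; rewrite cats0.
  by exists [::], k.+1; rewrite cats1 rcons_nseq.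
- by exists (j :: Q), k; rewrite cats0.
- by exists Q, k; rewrite cats0.
Qed.

Lemma fill_lam_id l1 P b : lam1_tail l1 (red (b ++ rhos P)) -> fill_lam l1 P b = b.
Proof.
elim: b => [|a b IH] //= [Q [k]]; rewrite red_cons.
case E: (red (b ++ rhos P)) => [[Q' L']|]; last by rewrite motz_mulr0.
have fill_b k' : L' = nseq k' l1 -> fill_lam l1 P b = b.
  by move=> EL'; apply: IH; exists Q', k'; rewrite E EL'.
case: a => [i|j|i] /=; last 2 first.
- by case=> _; rewrite cats0 => /fill_b ->.
- by case=> _; rewrite cats0 => /fill_b ->.
case: Q' E => [|j Q'] E /=; last first.
  by case: eqP => // -> [_]; rewrite cats0 => /fill_b fill_b'; rewrite fill_b' E.
case: k => [|k] [_] EL'; first by have := congr1 size EL'; rewrite size_cat addn1.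
move: EL'; rewrite cats1 -[_ :: _]/(nseq k.+1 l1) -rcons_nseq.
by case/rcons_inj=> /fill_b fill_b' ->; rewrite fill_b' E.
Qed.

Lemma fill_lam_erase l1 P w : fill_lam l1 P (map (erase_lam l1) w) = fill_lam l1 P w.
Proof. by elim: w => [|a w IH] //=; rewrite IH; case: a. Qed.

Lemma erase_fill_lam l1 P w :
  map (erase_lam l1) (fill_lam l1 P w) = map (erase_lam l1) w.
Proof. by elim: w => [|a w IH] //=; rewrite IH; case: a. Qed.

Lemma size_fill_lam l1 P w : size (fill_lam l1 P w) = size w.
Proof. by elim: w => [|a w IH] //=; rewrite IH. Qed.

Lemma all_erase_lam l1 w : all (in_G'alph l1) (map (erase_lam l1) w).
Proof. by elim: w => //= -[i|j|i] w ->; rewrite /= ?eqxx. Qed.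

Lemma erase_lam_id l1 w : all (in_G'alph l1) w -> map (erase_lam l1) w = w.
Proof. by elim: w => [|a w IH] //= /andP[+ /IH ->]; case: a => //= i /eqP ->. Qed.

Lemma admissible_elt_lam1 l1 P L : L = [::] \/ P = [::] ->
  positive_elt (Some (P, L)) \/ neutral_elt (Some (P, L)) \/
    lam_power l1 (Some (P, L)) <->
  exists k, L = nseq k l1.
Proof.
move=> PL; split.
  by case=> [[P' [_ [_ ->]]]|[[_ ->]|[k [_ [_ ->]]]]]; [exists 0|exists 0|exists k].
move=> [[|k] EL]; subst L.
  by case: P {PL} => [|p P]; [right; left | left; exists (p :: P)].
by case: PL => [|->] //; right; right; exists k.+1.
Qed.

Lemma admissibleP l1 b :
  admissible l1 b <-> red b <> None /\ lam1_tail l1 (red (b ++ rhos (rho_part b))).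
Proof.
case Eb: (red b) => [[P L]|]; last first.
  by split=> [[m [/is_multiplierP [P [L []]]]]|[]] //; rewrite Eb.
rewrite (rho_part_red Eb) red_cat Eb red_rhos.
have mult_b m : is_multiplier b m <-> m = motz_mul (Some ([::], L)) (Some (P, [::])).
  rewrite is_multiplierP; split=> [[P' [L' []]]|->]; last by exists P, L.
  by rewrite Eb => -[-> ->].
rewrite /admissible /=; case Ec: (cancel_lam_rho L P) => [[L1 P1]|] /=; last first.
  split=> [[m [/mult_b ->]]|[_ [Q [k //]]]].
  by rewrite /motz_mul Ec => -[[? [_ //]]|[//|[? [_ //]]]].
have equiv := admissible_elt_lam1 l1 (cancel_lam_rho_nil Ec).
split=> [[m [/mult_b ->]]|[_ [Q [k [_ EL1]]]]].
  by rewrite /motz_mul Ec => /equiv [k ->]; split=> //; exists (P ++ P1), k.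
exists (Some (P1, L1)); split; first by apply/mult_b; rewrite /motz_mul Ec.
by apply/equiv; exists k.
Qed.

Lemma blocks_G'words l1 n : exists f : block_set l1 n -> BnG' N n l1, bijective f.
Proof.
have wordP (c : block_set l1 n) :
    size (map (erase_lam l1) (sval c)) = n /\
    all (in_G'alph l1) (map (erase_lam l1) (sval c)).
  by case: c => b [size_b adm_b]; rewrite /= size_map all_erase_lam.
have blockP (w : BnG' N n l1) :
    size (fill_lam l1 (rho_part (sval w)) (sval w)) = n /\
    admissible l1 (fill_lam l1 (rho_part (sval w)) (sval w)).
  case: w => w [size_w G'w]; rewrite /= size_fill_lam; split=> //.
  have tail := lam1_tail_fill l1 (rho_part w) w.
  apply/admissibleP; have -> : rho_part (fill_lam l1 (rho_part w) w) = rho_part w.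
    by rewrite -(rho_part_erase l1) erase_fill_lam rho_part_erase.
  split=> //; case: tail => [Q [k E]].
  by apply: (@red_infix [::] _ (rhos (rho_part w))); rewrite E.
exists (fun c => exist (fun w => size w = n /\ all (in_G'alph l1) w) _ (wordP c)).
exists (fun w : BnG' N n l1 =>
  exist (fun b => size b = n /\ admissible l1 b) _ (blockP w)).
  move=> [b [size_b adm_b]]; apply: subset_eq_compat.
  case/admissibleP: (adm_b) => _ tail_b.
  by rewrite /= rho_part_erase fill_lam_erase fill_lam_id.
move=> [w [size_w G'w]]; apply: subset_eq_compat.
by rewrite /= erase_fill_lam erase_lam_id.
Qed.

End MotzkinPeriodicPoints.

Theorem proposition2p1 (M N : nat) (hM : (0 < M)%N) (n : nat) (hn : (1 <= n)%N) :
  exists f : PerSet N n (Ordinal hM) -> BnG' N n (Ordinal hM), bijective f.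
Proof.
have [f bij_f] := periodic_points_blocks N (Ordinal hM) hn.
have [g bij_g] := blocks_G'words N (Ordinal hM) n.
by exists (g \o f); apply: bij_comp.
Qed.
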